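(* Let $0<\varepsilon\le 1$. Then every point of $i(0,\infty)=\{i s: s>0\}$ is an eigenvalue of $t$, and every point of $-i(0,\infty)=\{-is: s>0\}$ is an eigenvalue of $S_\varepsilon$. In particular, $t$ and $S_\varepsilon$ are unbounded operators.
   Context: Work in $L^2(\mathbb{R})$ with inner product $(f,g)=\int\overline{f(x)}g(x)\,dx$. Let $q$ be the self-adjoint multiplication operator $(qf)(x)=xf(x)$ on $D(q)=\{f\in L^2(\mathbb{R}): xf\in L^2(\mathbb{R})\}$ and $p=-i\,\frac{d}{dx}$ the self-adjoint momentum operator. Since $q$ is injective and self-adjoint, $q^{-1}$ is a (densely defined) self-adjoint operator. Define $t=q^{-1}p$ with domain $D(t)=\{f\in D(p): pf\in D(q^{-1})\}$. Let $L^2_0$ denote the subspace of even functions in $L^2(\mathbb{R})$. For $0<\varepsilon\le1$, define the operator $S_\varepsilon$ in $L^2_0$ by $D(S_\varepsilon)=\{f\in L^2_0\cap\bigcap_{n\ge0}D(t^{2n+1}) : \lim_{N\to\infty}\sum_{n=0}^N\frac{(-1)^n}{2n+1}(\sqrt{\varepsilon}\,t)^{2n+1}f \text{ exists in norm}\}$, $S_\varepsilon f=-\frac{1}{\sqrt\varepsilon}\sum_{n=0}^\infty\frac{(-1)^n}{2n+1}(\sqrt\varepsilon\,t)^{2n+1}f$ (formally $S_\varepsilon=-\varepsilon^{-1/2}\arctan(\sqrt\varepsilon\, t)$). *)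

From HB Require Import structures.
From mathcomp Require Import all_boot all_order all_algebra.
From mathcomp Require Import all_classical all_reals all_analysis.
From mathcomp Require Import complex.

Set Implicit Arguments.
Unset Strict Implicit.
Unset Printing Implicit Defensive.

Import Order.TTheory GRing.Theory Num.Theory.
Import numFieldNormedType.Exports.

Local Open Scope classical_set_scope.
Local Open Scope ring_scope.
Local Open Scope complex_scope.

(* Complex-valued functions on the real line: f : R -> R[i].
   Elements of L^2(R) are represented by functions; equality in L^2 is
   Lebesgue-a.e. equality. *)

Section L2defs.
Variable R : realType.
Local Notation mu := (@lebesgue_measure R).
Local Notation C := (R[i]).

Definition cnorm2 (z : C) : R := (complex.Re z) ^+ 2 + (complex.Im z) ^+ 2.

Definition cmeasurable (f : R -> C) : Prop :=
  measurable_fun setT (fun x => complex.Re (f x)) /\ measurable_fun setT (fun x => complex.Im (f x)).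

Definition l2norm2 (f : R -> C) : \bar R := (\int[mu]_x (cnorm2 (f x))%:E)%E.

Definition L2 (f : R -> C) : Prop := cmeasurable f /\ (l2norm2 f < +oo)%E.

Definition aeq (f g : R -> C) : Prop := {ae mu, forall x, f x = g x}.

Definition L2even (f : R -> C) : Prop := L2 f /\ aeq f (fun x => f (- x)).

Definition cprim (h : R -> C) (x : R) : C :=
  if (0 <= x)%R then
    (Rintegral mu `[0, x] (fun y => complex.Re (h y))) +i* (Rintegral mu `[0, x] (fun y => complex.Im (h y)))
  else
    - ((Rintegral mu `[x, 0] (fun y => complex.Re (h y))) +i* (Rintegral mu `[x, 0] (fun y => complex.Im (h y)))).

(* graph of the momentum operator p = -i d/dx on its self-adjoint domain H^1(R):
   f \in D(p) and p f = g  iff  f, g \in L^2 and f is a.e. equal to an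
   absolutely continuous function with derivative i g, i.e.
   f(x) = c + i \int_0^x g  for a.e. x. *)
Definition is_p (f g : R -> C) : Prop :=
  L2 f /\ L2 g /\ exists c : C, {ae mu, forall x, f x = c + 'i * cprim g x}.

(* graph of q^{-1}: g \in D(q^{-1}) = Ran q and q^{-1} g = h  iff
   g, h \in L^2 and g(x) = x h(x) a.e. *)
Definition is_qinv (g h : R -> C) : Prop :=
  L2 g /\ L2 h /\ {ae mu, forall x, g x = x%:C * h x}.

Definition is_t (f h : R -> C) : Prop := exists g, is_p f g /\ is_qinv g h.

Fixpoint is_tpow (n : nat) (f h : R -> C) : Prop :=
  match n with
  | 0%N => L2 f /\ aeq f h
  | n'.+1 => exists g, is_t f g /\ is_tpow n' g h
  end.

Definition L2cvg (u : nat -> R -> C) (g : R -> C) : Prop :=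
  (fun n => l2norm2 (fun x => u n x - g x)) @ \oo --> 0%E.

Definition Scoef (eps : R) (n : nat) : R :=
  (-1) ^+ n / (n.*2.+1)%:R * (Num.sqrt eps) ^+ (n.*2.+1).

Definition is_S (eps : R) (f h : R -> C) : Prop :=
  L2even f /\
  exists T : nat -> R -> C,
    (forall n, is_tpow n.*2.+1 f (T n)) /\
    exists g : R -> C,
      L2 g /\
      L2cvg (fun N x => \sum_(n < N.+1) (Scoef eps n)%:C * T n x) g /\
      aeq h (fun x => - ((Num.sqrt eps)^-1)%:C * g x).

Definition eigenvalue_t (lam : C) : Prop :=
  exists f, L2 f /\ ~ aeq f (fun=> 0) /\ is_t f (fun x => lam * f x).

Definition eigenvalue_S (eps : R) (lam : C) : Prop :=
  exists f, L2even f /\ ~ aeq f (fun=> 0) /\ is_S eps f (fun x => lam * f x).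

Definition bounded_op (A : (R -> C) -> (R -> C) -> Prop) : Prop :=
  exists M : R, forall f h, A f h -> (l2norm2 h <= M%:E * l2norm2 f)%E.

End L2defs.

From HB Require Import structures.
From mathcomp Require Import all_boot all_order all_algebra.
From mathcomp Require Import all_classical all_reals all_analysis.
From mathcomp Require Import complex ring lra measurable_realfun normal_distribution.
Import Order.TTheory GRing.Theory Num.Theory.
Import numFieldNormedType.Exports.

Set Implicit Arguments.
Unset Strict Implicit.
Unset Printing Implicit Defensive.

Local Open Scope classical_set_scope.
Local Open Scope ring_scope.
Local Open Scope complex_scope.

(** The Gaussian [f = exp (- a x^2 / 2)], [a > 0], satisfies [f' = - a x f], so
[p f = i a x f] and [t f = q^-1 p f = i a f]; it is even, hence lies in [L^2_0].
On it every power [t^(2n+1)] acts as the scalar [(i a)^(2n+1)], and the series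
defining [S_eps] collapses to [- eps^(-1/2) i artanh (sqrt eps a) f], convergent
because [sqrt eps a < 1] once [a = tanh (sqrt eps s) / sqrt eps]; this gives the
eigenvalue [- i s].  Eigenvalues of arbitrarily large modulus rule out
boundedness. *)

Section complex_norm.
Variable R : realType.
Local Notation C := R[i].

Lemma cnorm2_ge0 (z : C) : 0 <= cnorm2 z.
Proof. by rewrite /cnorm2 addr_ge0 ?sqr_ge0. Qed.

Lemma cnorm2M (z w : C) : cnorm2 (z * w) = cnorm2 z * cnorm2 w.
Proof. by case: z => a b; case: w => c d; rewrite /cnorm2; simpc => /=; ring. Qed.

Lemma cnorm2N (z : C) : cnorm2 (- z) = cnorm2 z.
Proof. by case: z => a b; rewrite /cnorm2 /= !sqrrN. Qed.

Lemma cnorm2_realC (r : R) : cnorm2 r%:C = r ^+ 2.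
Proof. by rewrite /cnorm2 /= expr0n addr0. Qed.

Lemma cnorm2_realCi (r : R) : cnorm2 (r%:C * 'i) = r ^+ 2.
Proof. by rewrite cnorm2M cnorm2_realC /cnorm2 /= expr0n expr1n add0r mulr1. Qed.

Lemma mulr_realC (k : C) (r : R) : k * r%:C = (complex.Re k * r) +i* (complex.Im k * r).
Proof. by case: k => a b; simpc; congr (_ +i* _) => /=; ring. Qed.

End complex_norm.

Section square_integrable.
Variable R : realType.
Local Notation mu := (@lebesgue_measure R).
Local Notation C := R[i].

Lemma cmeasurable_realC (u : R -> R) :
  measurable_fun setT u -> cmeasurable (fun x => (u x)%:C).
Proof. by split. Qed.

Lemma cmeasurableZ (k : C) (f : R -> C) :
  cmeasurable f -> cmeasurable (fun x => k * f x).
Proof.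
case: k => a b [mRe mIm]; split.
- rewrite (_ : (fun x => _) = fun x => a * complex.Re (f x) - b * complex.Im (f x)).
    by apply: measurable_funB; apply: measurable_funM.
  by apply/funext => x; case: (f x).
- rewrite (_ : (fun x => _) = fun x => a * complex.Im (f x) + b * complex.Re (f x)).
    by apply: measurable_funD; apply: measurable_funM.
  by apply/funext => x; case: (f x).
Qed.

Lemma measurable_cnorm2 (f : R -> C) :
  cmeasurable f -> measurable_fun setT (fun x => cnorm2 (f x)).
Proof. by case=> mRe mIm; apply: measurable_funD; apply: measurable_funX. Qed.

Lemma l2norm2_ge0 (f : R -> C) : (0 <= l2norm2 f)%E.
Proof. by apply: integral_ge0 => x _; rewrite lee_fin cnorm2_ge0. Qed.

Lemma l2norm2Z (k : C) (f : R -> C) : cmeasurable f ->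
  l2norm2 (fun x => k * f x) = ((cnorm2 k)%:E * l2norm2 f)%E.
Proof.
move=> mf; rewrite /l2norm2.
under eq_integral do rewrite cnorm2M EFinM.
rewrite ge0_integralZl_EFin ?cnorm2_ge0 //.
- by move=> x _; rewrite lee_fin cnorm2_ge0.
- by apply/measurable_EFinP; exact: measurable_cnorm2.
Qed.

Lemma L2_fin_num (f : R -> C) : L2 f -> l2norm2 f \is a fin_num.
Proof. by case=> _ finf; rewrite ge0_fin_numE ?l2norm2_ge0. Qed.

Lemma L2Z (k : C) (f : R -> C) : L2 f -> L2 (fun x => k * f x).
Proof.
move=> f2; have [mf _] := f2; split; first exact: cmeasurableZ.
by rewrite l2norm2Z // -(fineK (L2_fin_num f2)) -EFinM ltry.
Qed.

Lemma L2_realC (u : R -> R) : measurable_fun setT u ->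
  (\int[mu]_x (u x ^+ 2)%:E < +oo)%E -> L2 (fun x => (u x)%:C).
Proof.
move=> meas_u finu; split; first exact: cmeasurable_realC.
by rewrite /l2norm2; under eq_integral do rewrite cnorm2_realC.
Qed.

Lemma nowhere0_not_aeq0 (f : R -> C) : (forall x, f x != 0) -> ~ aeq f (fun=> 0).
Proof.
move=> f_neq0 f_ae0.
have muT : (0 < mu [set: R])%E.
  apply: (@lt_le_trans _ _ (mu `[0%R, 1%R])); last by apply: le_measure; rewrite ?inE.
  by rewrite lebesgue_measure_itv /= lte01 oppr0 adde0 lte_fin ltr01.
have [x /eqP] := @filter_ex _ _ (ae_properfilter_algebraOfSetsType muT) _ f_ae0.
by rewrite (negbTE (f_neq0 x)).
Qed.

Lemma L2cvg_realC_scale (u : nat -> R) (l : R) (f : R -> C) :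
  L2 f -> u @ \oo --> l -> L2cvg (fun N x => (u N)%:C * f x) (fun x => l%:C * f x).
Proof.
move=> f2 u_cvg; have [mf _] := f2.
set K := fine (l2norm2 f).
rewrite /L2cvg (_ : (fun N => _) = fun N => ((u N - l) * (u N - l) * K)%:E); last first.
  apply/funext => N; rewrite (_ : (fun x => _) = fun x => (u N - l)%:C * f x).
    by rewrite l2norm2Z // cnorm2_realC expr2 [RHS]EFinM /K fineK ?L2_fin_num.
  by apply/funext => x; rewrite rmorphB mulrBl.
apply: cvg_EFin; first exact: nearW.
have ul0 : (fun N => u N - l) @ \oo --> 0 by exact/subr_cvg0.
have := cvgM (cvgM ul0 ul0) (cvg_cst K); rewrite !mul0r; exact.
Qed.

Lemma not_bounded_op_eigen (A : (R -> C) -> (R -> C) -> Prop) :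
  (forall s : R, 0 < s -> exists (lam : C) (f : R -> C),
     [/\ cnorm2 lam = s ^+ 2, L2 f, (0 < l2norm2 f)%E & A f (fun x => lam * f x)]) ->
  ~ bounded_op A.
Proof.
move=> eig [M boundA].
have [|lam [f [lam_s f2 f_gt0 Af]]] := eig (`|M| + 1); first by rewrite ltr_wpDl.
move: (boundA _ _ Af) f_gt0; have [mf _] := f2.
rewrite l2norm2Z // -(fineK (L2_fin_num f2)) lam_s.
rewrite lte_fin -!EFinM lee_fin => le_sM K_gt0.
move: le_sM; rewrite ler_pM2r // leNgt => /negP; apply.
by have := ler_norm M; have := normr_ge0 M; nra.
Qed.

End square_integrable.

Section primitive.
Variable R : realType.
Local Notation mu := (@lebesgue_measure R).
Local Notation C := R[i].

Lemma Rintegral_itv_derive (F f : R -> R) (a b : R) : a <= b ->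
  (forall x : R, is_derive x (1 : R) F (f x)) -> continuous f ->
  Rintegral mu `[a, b] f = F b - F a.
Proof.
move=> ab dF cf; have [<-|a_neq_b] := eqVneq a b.
  by rewrite set_itv1 Rintegral_set1 subrr.
have {ab a_neq_b} ab : a < b by rewrite lt_neqAle a_neq_b ab.
have cF : continuous F.
  by move=> x; apply/differentiable_continuous/derivable1_diffP; case: (dF x).
rewrite /Rintegral (@continuous_FTC2 _ f F _ _ ab) //.
- exact: continuous_subspaceT.
- split; first by move=> x _; case: (dF x).
  + exact/cvg_at_right_filter/cF.
  + exact/cvg_at_left_filter/cF.
- by move=> x _; rewrite derive1E; case: (dF x) => _ ->.
Qed.

Lemma cprim_realC (k : C) (w W : R -> R) :
  (forall x : R, is_derive x (1 : R) W (w x)) -> continuous w ->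
  forall x, cprim (fun y => k * (w y)%:C) x = k * (W x - W 0)%:C.
Proof.
move=> dW cw.
have integral_scaled c a b : a <= b ->
    Rintegral mu `[a, b] (fun y => c * w y) = c * (W b - W a).
  move=> ab; rewrite (@Rintegral_itv_derive (fun y => c * W y)) ?mulrBr //.
  by move=> x; apply: continuousM; [exact: cvg_cst | exact: cw].
move=> x; rewrite /cprim.
have -> : (fun y => complex.Re (k * (w y)%:C)) = (fun y => complex.Re k * w y).
  by apply/funext => y; rewrite mulr_realC.
have -> : (fun y => complex.Im (k * (w y)%:C)) = (fun y => complex.Im k * w y).
  by apply/funext => y; rewrite mulr_realC.
rewrite mulr_realC; case: ifPn => x0; first by rewrite !integral_scaled.
rewrite !integral_scaled 1?ltW ?ltNge //; simpc.
by congr (_ +i* _); ring.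
Qed.

End primitive.

Section gaussian.
Variable R : realType.
Local Notation mu := (@lebesgue_measure R).
Implicit Types a x : R.

Definition gauss (a x : R) : R := expR (- a * x ^+ 2 / 2).

Lemma gauss_gt0 a x : 0 < gauss a x.
Proof. exact: expR_gt0. Qed.

Lemma gauss0 a : gauss a 0 = 1.
Proof. by rewrite /gauss expr0n /= mulr0 mul0r expR0. Qed.

Lemma gaussN a x : gauss a (- x) = gauss a x.
Proof. by rewrite /gauss sqrrN. Qed.

Lemma gauss_sqr a x : gauss a x ^+ 2 = gauss (a *+ 2) x.
Proof. by rewrite /gauss expr2 -expRD mulr2n; congr expR; field. Qed.

Lemma is_derive_gauss a x : is_derive x (1 : R) (gauss a) (- a * x * gauss a x).
Proof.
have -> : gauss a = expR \o ((- a / 2) \*: (@id R * @id R)).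
  by apply/funext => y /=; rewrite /gauss expr2 mulrAC.
by apply: is_derive_eq; rewrite /GRing.scale /= mulr1; field.
Qed.

Lemma continuous_gauss a : continuous (gauss a).
Proof.
by move=> x; apply/differentiable_continuous/derivable1_diffP; case: (is_derive_gauss a x).
Qed.

Lemma measurable_gauss a : measurable_fun setT (gauss a).
Proof. by apply: continuous_measurable_fun; exact: continuous_gauss. Qed.

Lemma integral_gauss a : 0 < a ->
  (\int[mu]_x (gauss a x)%:E = (Num.sqrt (a^-1 * pi *+ 2))%:E)%E.
Proof.
move=> a_gt0; set s := Num.sqrt a^-1.
have s_neq0 : s != 0 by rewrite gt_eqF // sqrtr_gt0 invr_gt0.
have s2 : s ^+ 2 = a^-1 by rewrite sqr_sqrtr // invr_ge0 ltW.
have gaussE x : gauss a x = (normal_peak s)^-1 * normal_pdf 0 s x.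
  rewrite /normal_pdf (negbTE s_neq0) mulrA mulVf ?gt_eqF ?normal_peak_gt0 // mul1r.
  rewrite /normal_fun /gauss subr0 s2; congr expR; field.
  by rewrite gt_eqF.
under eq_integral do rewrite gaussE EFinM.
rewrite ge0_integralZl_EFin ?integral_normal_pdf ?mule1 ?invr_ge0 ?normal_peak_ge0 //.
- by rewrite /normal_peak invrK s2.
- by move=> x _; rewrite lee_fin normal_pdf_ge0.
- by apply/measurable_EFinP; exact: measurable_normal_pdf.
Qed.

Lemma l2norm2_gauss a : 0 < a ->
  l2norm2 (fun x => (gauss a x)%:C) = (Num.sqrt ((a *+ 2)^-1 * pi *+ 2))%:E.
Proof.
move=> a_gt0; rewrite /l2norm2.
under eq_integral do rewrite cnorm2_realC gauss_sqr.
by rewrite integral_gauss // mulrn_wgt0.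
Qed.

Lemma L2_gauss a : 0 < a -> L2 (fun x => (gauss a x)%:C).
Proof.
move=> a_gt0; split; first by apply: cmeasurable_realC; exact: measurable_gauss.
by rewrite l2norm2_gauss // ltry.
Qed.

Lemma l2norm2_gauss_gt0 a : 0 < a -> (0 < l2norm2 (fun x => (gauss a x)%:C))%E.
Proof.
move=> a_gt0; rewrite l2norm2_gauss // lte_fin sqrtr_gt0.
by rewrite mulrn_wgt0 // mulr_gt0 ?pi_gt0 // invr_gt0 mulrn_wgt0.
Qed.

(* [u e^(-u) <= 1] with [u = a x^2 / 2] *)
Lemma sqr_xgauss_le a x : 0 < a -> (x * gauss a x) ^+ 2 <= 2 / a * gauss a x.
Proof.
move=> a_gt0; set u := a * x ^+ 2 / 2.
have u_gauss_le1 : u * gauss a x <= 1.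
  have -> : gauss a x = expR (- u) by rewrite /gauss /u !mulNr.
  rewrite -(expRxMexpNx_1 u) ler_wpM2r ?expR_ge0 //.
  by have := expR_ge1Dx u; lra.
have x2_gauss_le : x ^+ 2 * gauss a x <= 2 / a.
  have -> : x ^+ 2 = 2 / a * u by rewrite /u; field; rewrite gt_eqF.
  by rewrite -(mulrA (2 / a)); apply: ler_piMr; rewrite // divr_ge0 // ltW.
rewrite exprMn expr2 mulrA; apply: ler_wpM2r => //.
exact/ltW/gauss_gt0.
Qed.

Lemma L2_xgauss a : 0 < a -> L2 (fun x => (x * gauss a x)%:C).
Proof.
move=> a_gt0; have mg := measurable_gauss a.
apply: L2_realC; first exact: measurable_funM.
apply: (@le_lt_trans _ _ (\int[mu]_x ((2 / a)%:E * (gauss a x)%:E))%E).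
  apply: ge0_le_integral => //.
  - by move=> x _; rewrite lee_fin sqr_ge0.
  - by apply/measurable_EFinP; apply: measurable_funX; exact: measurable_funM.
  - by apply/measurable_EFinP; exact: measurable_funM.
  - by move=> x _; rewrite -EFinM lee_fin sqr_xgauss_le.
rewrite ge0_integralZl_EFin ?integral_gauss ?ltry // ?divr_ge0 ?ltW //.
- by move=> x _; rewrite lee_fin ltW ?gauss_gt0.
- exact/measurable_EFinP.
Qed.

End gaussian.

Section gaussian_eigenfunction.
Variable R : realType.
Local Notation C := R[i].

Definition gaussC (a : R) (k : C) (x : R) : C := k * (gauss a x)%:C.

Variable a : R.
Hypothesis a_gt0 : 0 < a.

Lemma L2_gaussC k : L2 (gaussC a k).
Proof. exact/L2Z/L2_gauss. Qed.

Lemma l2norm2_gaussC1_gt0 : (0 < l2norm2 (gaussC a 1%R))%E.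
Proof.
rewrite (_ : gaussC a 1 = fun x => (gauss a x)%:C); first exact: l2norm2_gauss_gt0.
by apply/funext => x; rewrite /gaussC mul1r.
Qed.

Lemma gaussC1_not_aeq0 : ~ aeq (gaussC a 1) (fun=> 0).
Proof.
apply: nowhere0_not_aeq0 => x; rewrite /gaussC mul1r.
by rewrite (inj_eq (@complexI _)) gt_eqF ?gauss_gt0.
Qed.

Lemma gaussC_even k : aeq (gaussC a k) (fun x => gaussC a k (- x)).
Proof. by apply: aeW => x; rewrite /gaussC gaussN. Qed.

Lemma is_p_gaussC k : is_p (gaussC a k) (fun x => a%:C * 'i * k * (x * gauss a x)%:C).
Proof.
have dW y : is_derive y (1 : R) (fun y => - a^-1 * gauss a y) (y * gauss a y).
  have dg := is_derive_gauss a y.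
  have -> : (fun y => - a^-1 * gauss a y) = (- a^-1) \*: gauss a by [].
  apply: is_derive_eq; rewrite /GRing.scale /=.
  by field; rewrite gt_eqF.
have cW : continuous (fun y : R => y * gauss a y).
  by move=> y; apply: continuousM; [exact: cvg_id | exact: continuous_gauss].
split; first exact: L2_gaussC.
split; first exact/L2Z/L2_xgauss.
exists k; apply: aeW => x.
rewrite (cprim_realC _ dW cW) gauss0 /gaussC.
case: k => k1 k2; simpc => /=; simpc.
by congr (_ +i* _); field; rewrite gt_eqF.
Qed.

Lemma is_t_gaussC k : is_t (gaussC a k) (fun x => a%:C * 'i * gaussC a k x).
Proof.
exists (fun x => a%:C * 'i * k * (x * gauss a x)%:C); split; first exact: is_p_gaussC.
split; first exact/L2Z/L2_xgauss.
split; first exact/L2Z/L2_gaussC.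
by apply: aeW => x; rewrite /gaussC rmorphM /=; ring.
Qed.

Lemma is_tpow_gaussC n k :
  is_tpow n (gaussC a k) (fun x => (a%:C * 'i) ^+ n * gaussC a k x).
Proof.
elim: n k => [|n IHn] k /=.
  by split; [exact: L2_gaussC | apply: aeW => x; rewrite expr0 mul1r].
exists (gaussC a (a%:C * 'i * k)); split.
  rewrite (_ : gaussC a (a%:C * 'i * k) = fun x => a%:C * 'i * gaussC a k x).
    exact: is_t_gaussC.
  by apply/funext => x; rewrite /gaussC mulrA.
rewrite (_ : (fun x => _) = fun x => (a%:C * 'i) ^+ n * gaussC a (a%:C * 'i * k) x) //.
by apply/funext => x; rewrite /gaussC exprSr !mulrA.
Qed.

End gaussian_eigenfunction.

Section artanh.
Variable R : realType.
Implicit Types (x r c : R) (N : nat).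

Definition artanh x : R := (ln (1 + x) - ln (1 - x)) / 2.

Definition artanh_psum N x : R := \sum_(n < N) x ^+ n.*2.+1 / n.*2.+1%:R.

Definition tanh c : R := (expR (c *+ 2) - 1) / (expR (c *+ 2) + 1).

Lemma is_derive_artanh x : -1 < x < 1 ->
  is_derive x (1 : R) artanh (1 - x ^+ 2)^-1.
Proof.
case/andP=> x_gtN1 x_lt1.
have dlnD : is_derive x (1 : R) (@ln R \o (fun y => 1 + y)) ((1 + x)^-1 * 1).
  apply: is_derive1_comp; first by apply: is_derive1_ln; lra.
  by apply: is_derive_eq; rewrite add0r mulr1.
have dlnB : is_derive x (1 : R) (@ln R \o (fun y => 1 - y)) ((1 - x)^-1 * -1).
  apply: is_derive1_comp; first by apply: is_derive1_ln; lra.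
  by apply: is_derive_eq; rewrite add0r mul1r.
have -> : artanh = 2^-1 \*: ((@ln R \o (fun y => 1 + y)) - (@ln R \o (fun y => 1 - y))).
  by apply/funext => y; rewrite /artanh /= mulrC.
apply: is_derive_eq; rewrite /GRing.scale /=.
by field; rewrite !gt_eqF //; nra.
Qed.

Lemma is_derive_artanh_psum_sub N x : -1 < x < 1 ->
  is_derive x (1 : R) (fun y => artanh_psum N y - artanh y) (- x ^+ N.*2 / (1 - x ^+ 2)).
Proof.
move=> x_itv; have sqr_x_lt1 : 1 - x ^+ 2 != 0 by rewrite gt_eqF //; nra.
elim: N => [|N IHN].
  have dartanh := is_derive_artanh x_itv.
  rewrite (_ : (fun y => _) = - artanh); last first.
    by apply/funext => y; rewrite /artanh_psum big_ord0 sub0r.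
  by apply: is_derive_eq; rewrite expr0 mulNr mul1r.
rewrite (_ : (fun y => _) = (fun y => artanh_psum N y - artanh y) +
    (N.*2.+1%:R)^-1 \*: (@id R ^+ N.*2.+1)); last first.
  apply/funext => y; rewrite /artanh_psum big_ord_recr /= !fctE /=.
  by rewrite /GRing.scale /= mulrC; ring.
apply: is_derive_eq; rewrite /GRing.scale /= mulr1 doubleS !exprS.
by field; rewrite -expr2 sqr_x_lt1 addrC natr1 pnatr_eq0.
Qed.

Lemma artanh_psum_sub0 N : artanh_psum N 0 - artanh 0 = 0.
Proof.
rewrite /artanh_psum /artanh big1 => [|n _]; last by rewrite expr0n mul0r.
by rewrite addr0 subr0 subrr mul0r subr0.
Qed.

Lemma artanh_psum_sub_le N r : 0 <= r < 1 ->
  `|artanh_psum N r - artanh r| <= r ^+ N.*2.+1 / (1 - r ^+ 2).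
Proof.
case/andP=> r_ge0 r_lt1; have [->|r_neq0] := eqVneq r 0.
  by rewrite artanh_psum_sub0 normr0 expr0n mul0r.
have r_gt0 : 0 < r by rewrite lt_neqAle eq_sym r_neq0.
have dD y : y \in `]0, r[ -> is_derive y (1 : R)
    (fun y => artanh_psum N y - artanh y) (- y ^+ N.*2 / (1 - y ^+ 2)).
  by rewrite in_itv /= => /andP[y_gt0 y_ltr]; apply: is_derive_artanh_psum_sub; lra.
have cD : {within `[0, r], continuous (fun y => artanh_psum N y - artanh y)}.
  apply: derivable_within_continuous => y; rewrite in_itv /= => /andP[y_ge0 y_ler].
  have y_itv : -1 < y < 1 by apply/andP; split; lra.
  by case: (is_derive_artanh_psum_sub N y_itv).
have [y] := MVT r_gt0 dD cD; rewrite in_itv /= => /andP[y_gt0 y_ltr].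
rewrite artanh_psum_sub0 subr0 subr0 => ->.
have y2_lt1 : 0 < 1 - y ^+ 2 by nra.
have r2_lt1 : 0 < 1 - r ^+ 2 by nra.
rewrite normrM mulNr normrN (ger0_norm r_ge0) (exprSr r N.*2) mulrAC ler_pM2r //.
rewrite ger0_norm; last by rewrite divr_ge0 ?exprn_ge0 // ltW.
apply: ler_pM; rewrite ?exprn_ge0 ?invr_ge0 //; try exact: ltW.
- by rewrite lerXn2r // ?nnegrE ltW.
- by rewrite lef_pV2 ?posrE //; nra.
Qed.

Lemma artanh_psum_cvg r : 0 <= r < 1 -> artanh_psum N r @[N --> \oo] --> artanh r.
Proof.
case/andP=> r_ge0 r_lt1; apply/subr_cvg0/norm_cvg0P.
apply: (@squeeze_cvgr _ _ _ _ (cst 0) (fun N => (r ^+ 2) ^+ N * (r / (1 - r ^+ 2)))).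
- near=> N; rewrite normr_ge0 /= mulrA -exprM mul2n -exprSr.
  by apply: artanh_psum_sub_le; rewrite r_ge0.
- exact: cvg_cst.
- rewrite -(mul0r (r / (1 - r ^+ 2))); apply: cvgM; last exact: cvg_cst.
  by apply: cvg_expr; rewrite ger0_norm ?exprn_ge0 //; nra.
Unshelve. all: by end_near.
Qed.

Lemma tanh_gt0 c : 0 < c -> 0 < tanh c.
Proof.
move=> c_gt0; have E_gt1 : 1 < expR (c *+ 2) by rewrite expR_gt1 mulrn_wgt0.
by rewrite divr_gt0 //; lra.
Qed.

Lemma tanh_lt1 c : tanh c < 1.
Proof.
have E_gt0 := expR_gt0 (c *+ 2).
by rewrite ltr_pdivrMr; lra.
Qed.

Lemma artanh_tanh c : artanh (tanh c) = c.
Proof.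
set E := expR (c *+ 2); have E_gt0 : 0 < E := expR_gt0 _.
have tanhB_gt0 : 0 < 1 - tanh c by have := tanh_lt1 c; lra.
have tanhD : 1 + tanh c = E * (1 - tanh c).
  by rewrite /tanh -/E; field; rewrite gt_eqF //; lra.
by rewrite /artanh tanhD lnM ?posrE // addrK expRK; field.
Qed.

End artanh.

Section S_eigenfunction.
Variable R : realType.
Local Notation C := R[i].
Variable eps : R.
Hypothesis eps_gt0 : 0 < eps.
Local Notation se := (Num.sqrt eps).

Lemma Scoef_mul_iX (a : R) n : (Scoef eps n)%:C * (a%:C * 'i) ^+ n.*2.+1 =
  ((se * a) ^+ n.*2.+1 / n.*2.+1%:R)%:C * 'i.
Proof.
have iX : 'i ^+ n.*2.+1 = ((-1) ^+ n)%:C * 'i :> C.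
  by rewrite exprSr -mul2n exprM sqr_i rmorphXn rmorphN1.
have signK : (-1) ^+ n * (-1) ^+ n = 1 :> R by rewrite -exprMn mulrNN mulr1 expr1n.
rewrite exprMn iX -rmorphXn /Scoef !mulrA -!rmorphM; congr (_%:C * _).
apply: (@etrans _ _ ((-1) ^+ n * (-1) ^+ n * ((se * a) ^+ n.*2.+1 / n.*2.+1%:R))).
  by rewrite exprMn; ring.
by rewrite signK mul1r.
Qed.

Lemma is_S_gaussC a : 0 < a -> se * a < 1 ->
  is_S eps (gaussC a 1) (fun x => - ((artanh (se * a) / se)%:C * 'i) * gaussC a 1 x).
Proof.
move=> a_gt0 r_lt1; set r := se * a.
have r_ge0 : 0 <= r by rewrite mulr_ge0 ?sqrtr_ge0 ?ltW.
split; first by split; [exact: L2_gaussC | exact: gaussC_even].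
exists (fun n x => (a%:C * 'i) ^+ n.*2.+1 * gaussC a 1 x).
split; first by move=> n; exact: is_tpow_gaussC.
exists (fun x => (artanh r)%:C * ('i * gaussC a 1 x)).
split; first exact/L2Z/L2Z/L2_gaussC.
split.
  rewrite (_ : (fun N x => _) = fun N x => (artanh_psum N.+1 r)%:C * ('i * gaussC a 1 x)).
    apply: L2cvg_realC_scale; first exact/L2Z/L2_gaussC.
    by rewrite (cvg_shiftS (fun N => artanh_psum N r)); apply: artanh_psum_cvg; rewrite r_ge0.
  apply/funext => N; apply/funext => x.
  under eq_bigr do rewrite mulrA Scoef_mul_iX.
  by rewrite -mulr_suml -mulr_suml -rmorph_sum [RHS]mulrA.
by apply: aeW => x; rewrite rmorphM /=; ring.
Qed.

Lemma is_S_gauss_eigen s : 0 < s -> exists2 a : R, 0 < a &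
  is_S eps (gaussC a 1) (fun x => - (s%:C * 'i) * gaussC a 1 x).
Proof.
move=> s_gt0; have se_gt0 : 0 < se by rewrite sqrtr_gt0.
set a := tanh (se * s) / se.
have sea : se * a = tanh (se * s) by rewrite /a mulrC divfK ?gt_eqF.
have a_gt0 : 0 < a by rewrite divr_gt0 // tanh_gt0 // mulr_gt0.
have r_lt1 : se * a < 1 by rewrite sea tanh_lt1.
have -> : s = artanh (se * a) / se by rewrite sea artanh_tanh mulrC mulKf ?gt_eqF.
by exists a => //; exact: is_S_gaussC.
Qed.

End S_eigenfunction.

Theorem theorem3p3 (R : realType) (eps : R) (heps : 0 < eps <= 1) :
  (forall s : R, 0 < s -> eigenvalue_t (s%:C * 'i)) /\
  (forall s : R, 0 < s -> eigenvalue_S eps (- (s%:C * 'i))) /\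
  ~ bounded_op (@is_t R) /\ ~ bounded_op (is_S eps).
Proof.
case/andP: heps => eps_gt0 _.
split.
  move=> s s_gt0; exists (gaussC s 1).
  split; first exact: L2_gaussC.
  by split; [exact: gaussC1_not_aeq0 | exact: is_t_gaussC].
split.
  move=> s s_gt0; have [a a_gt0 Sa] := is_S_gauss_eigen eps_gt0 s_gt0.
  exists (gaussC a 1); split; first by case: Sa.
  by split; [exact: gaussC1_not_aeq0 | exact: Sa].
split; apply: not_bounded_op_eigen => s s_gt0.
  exists (s%:C * 'i), (gaussC s 1).
  by split; [exact: cnorm2_realCi | exact: L2_gaussC | exact: l2norm2_gaussC1_gt0 | exact: is_t_gaussC].
have [a a_gt0 Sa] := is_S_gauss_eigen eps_gt0 s_gt0.
exists (- (s%:C * 'i)), (gaussC a 1).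
by split; [rewrite cnorm2N cnorm2_realCi | exact: L2_gaussC | exact: l2norm2_gaussC1_gt0 | exact: Sa].
Qed.
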